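(* Let $\mathcal{O}$ be a nonempty set of quantum channels on $n$ qubits and let $\Psi$ be a quantum channel on $n$ qubits with $\gamma(\Psi)<\infty$. Let $\mathcal{O}_\Psi:=\mathcal{O}\cup\{\Psi\}$. Then for every sample $S=(z_1,\ldots,z_m)$ with $z_i\in\mathbb{F}_2^n\times\mathbb{F}_2^n$, \[ \hat{R}_S(\mathcal{F}(\mathcal{O}))\le \hat{R}_S(\mathcal{F}(\mathcal{O}_\Psi))\le (1+\gamma(\Psi))\,\hat{R}_S(\mathcal{F}(\mathcal{O})). \] Consequently, for every probability distribution $D$ on $\mathbb{F}_2^n\times\mathbb{F}_2^n$, \[ R_D(\mathcal{F}(\mathcal{O}))\le R_D(\mathcal{F}(\mathcal{O}_\Psi))\le (1+\gamma(\Psi))\,R_D(\mathcal{F}(\mathcal{O})). \]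
   Context: A quantum channel on $n$ qubits is a completely positive trace-preserving linear map on $2^n\times 2^n$ complex matrices. For a channel (or, more generally, a linear map) $\Phi$, define $f_\Phi:\mathbb{F}_2^n\times\mathbb{F}_2^n\to\mathbb{R}$ by $f_\Phi(x,y)=\mathrm{Tr}[\Phi(|x\rangle\langle x|)\,|y\rangle\langle y|]$, where $|x\rangle$ is the computational basis state; $f_\Phi$ depends linearly on $\Phi$. For a set $\Omega$ of channels, $\mathcal{F}(\Omega)=\{f_\Phi:\Phi\in\Omega\}$. For a class $\mathcal{G}$ of real-valued functions and a sample $S=(z_1,\ldots,z_m)$, the empirical Rademacher complexity is $\hat{R}_S(\mathcal{G})=\mathbb{E}_{\epsilon}\big[\sup_{g\in\mathcal{G}}\frac1m\sum_{i=1}^m\epsilon_i g(z_i)\big]$, where $\epsilon_1,\ldots,\epsilon_m$ are i.i.d. uniform on $\{-1,+1\}$. For a distribution $D$, $R_D(\mathcal{G})=\mathbb{E}_{S\sim D^m}[\hat{R}_S(\mathcal{G})]$ (samples $z_i$ i.i.d. from $D$). $\mathrm{Conv}(\mathcal{O})$ is the convex hull of $\mathcal{O}$. The free robustness of a channel $\Psi$ with respect to $\mathcal{O}$ is $\gamma(\Psi)=\inf\{\lambda\ge0:\exists\,\Phi\in\mathrm{Conv}(\mathcal{O})\text{ with }(\Psi+\lambda\Phi)/(1+\lambda)\in\mathrm{Conv}(\mathcal{O})\}$. *)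

From HB Require Import structures.
From mathcomp Require Import all_boot all_order all_algebra.
From mathcomp Require Import complex mxtens.
From mathcomp Require Import boolp classical_sets reals.

Set Implicit Arguments.
Unset Strict Implicit.
Unset Printing Implicit Defensive.

Import Order.TTheory GRing.Theory Num.Theory.
Local Open Scope ring_scope.
Local Open Scope classical_set_scope.

Section QChannels.
Variable R : realType.
Local Notation C := (complex R).

Definition toC (x : R) : C := (x%:C)%C.

Definition adjmx m n (A : 'M[C]_(m, n)) : 'M[C]_(n, m) := (map_mx Num.conj A)^T.

(** Positive semidefinite: v^* A v >= 0 for every vector v (in the order of the
    numClosedField C, so the value is real and nonnegative). *)
Definition psd d (A : 'M[C]_d) : Prop :=
  forall v : 'cV[C]_d, 0 <= (adjmx v *m A *m v) 0 0.

Definition qmat n := 'M[C]_((2 ^ n)%N).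
Definition qmap n := qmat n -> qmat n.

(** Phi (x) id_k applied to an operator on C^(2^n) (x) C^k, defined blockwise:
    (Phi (x) id_k)(X) = sum_{a,b} Phi(X_{ab}) (x) |a><b|. *)
Definition ext_id n (Phi : qmap n) (k : nat) (X : 'M[C]_((2 ^ n * k)%N)) : 'M[C]_((2 ^ n * k)%N) :=
  \sum_(a < k) \sum_(b < k)
     (Phi (\matrix_(i, j) X (mxtens_index (i, a)) (mxtens_index (j, b)))
      *t (delta_mx a b : 'M[C]_k)).

Definition completely_positive n (Phi : qmap n) : Prop :=
  forall (k : nat) (X : 'M[C]_((2 ^ n * k)%N)), psd X -> psd (ext_id Phi X).

Definition trace_preserving n (Phi : qmap n) : Prop :=
  forall X : qmat n, \tr (Phi X) = \tr X.

Definition is_channel n (Phi : qmap n) : Prop :=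
  linear Phi /\ completely_positive Phi /\ trace_preserving Phi.

Definition conv_hull n (O : set (qmap n)) : set (qmap n) :=
  fun Phi => exists (k : nat) (w : 'I_k -> R) (Phis : 'I_k -> qmap n),
    [/\ forall i, 0 <= w i, \sum_(i < k) w i = 1, forall i, O (Phis i) &
        forall X, Phi X = \sum_(i < k) toC (w i) *: Phis i X].

Definition robustness_set n (O : set (qmap n)) (Psi : qmap n) : set R :=
  [set lam | 0 <= lam /\ exists Phi, conv_hull O Phi /\
      conv_hull O (fun X => toC (1 + lam)^-1 *: (Psi X + toC lam *: Phi X))].

Definition robustness n (O : set (qmap n)) (Psi : qmap n) : R :=
  inf (robustness_set O Psi).

(** gamma(Psi) < oo  iff the defining set is nonempty. *)
Definition robustness_finite n (O : set (qmap n)) (Psi : qmap n) : Prop :=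
  robustness_set O Psi !=set0.

Definition bits n := 'rV['F_2]_n.

Lemma card_bits n : #|{: bits n}| = (2 ^ n)%N.
Proof. by rewrite card_mx card_Fp // mul1n. Qed.

(** Index of the computational basis state |x> (any fixed bijection F_2^n -> [0,2^n)). *)
Definition bidx n (x : bits n) : 'I_((2 ^ n)%N) := cast_ord (card_bits n) (enum_rank x).

Definition ket n (x : bits n) : 'cV[C]_((2 ^ n)%N) := \col_i ((i == bidx x)%:R).

Definition proj n (x : bits n) : qmat n := ket x *m adjmx (ket x).

(** f_Phi(x,y) = Tr[Phi(|x><x|) |y><y|]  (a real number for channels; we take the real part). *)
Definition fPhi n (Phi : qmap n) (z : bits n * bits n) : R :=
  complex.Re (\tr (Phi (proj z.1) *m proj z.2)).

Definition Fcl n (O : set (qmap n)) : set (bits n * bits n -> R) := fPhi (n:=n) @` O.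

Definition emp_rademacher (Z : Type) (G : set (Z -> R)) (m : nat) (S : 'I_m -> Z) : R :=
  (2 ^ m)%N%:R^-1 * \sum_(eps : {ffun 'I_m -> bool})
     sup [set (m%:R^-1 * \sum_(i < m) ((-1) ^+ eps i) * g (S i)) | g in G].

Definition is_distribution (Z : finType) (D : {ffun Z -> R}) : Prop :=
  (forall z, 0 <= D z) /\ \sum_z D z = 1.

Definition rademacher (Z : finType) (D : {ffun Z -> R}) (G : set (Z -> R)) (m : nat) : R :=
  \sum_(S : {ffun 'I_m -> Z}) (\prod_(i < m) D (S i)) * emp_rademacher G S.

End QChannels.

From HB Require Import structures.
From mathcomp Require Import all_boot all_order all_algebra.
From mathcomp Require Import complex mxtens.
From mathcomp Require Import boolp classical_sets reals.
From mathcomp Require Import ring lra.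

Import Order.TTheory GRing.Theory Num.Theory.
Local Open Scope ring_scope.
Local Open Scope classical_set_scope.
Set Implicit Arguments.
Unset Strict Implicit.

(* Fix a sign vector e and write s_G(e) for the supremum over g in a function
   class G of the correlation  corr_e(g) = 1/m sum_i (-1)^(e_i) g(z_i); the
   empirical Rademacher complexity is the average of s_G(e) over e.
   1. Quantum part: every f_Phi of a channel takes values in [0,1] (complete
      positivity gives nonnegative diagonals, trace preservation gives sum 1),
      and f_Phi depends linearly on Phi.  Hence f of a convex combination of
      channels of O lies in the convex hull of F(O), and if lambda witnesses
      gamma(Psi) then f_Psi = (1+lambda) g' - lambda g with g, g' in that hull.
   2. Function-class part: for such a decomposition of h, adding h to G gives
      s_{G+h}(e) + s_{G+h}(-e) <= (1+lambda) (s_G(e) + s_G(-e)); averaging over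
      e (the flip e -> -e is a bijection) bounds the complexity by (1+lambda)
      times that of G, and taking the infimum over lambda gives (1+gamma).
   3. The distributional bound is the expectation of the empirical one. *)

(** * Channels and the functions f_Phi *)

Section ChannelFunctions.
Variable R : realType.
Local Notation C := (complex R).

Lemma adjmx_delta m n (i : 'I_m) (j : 'I_n) :
  adjmx (delta_mx i j : 'M[C]_(m, n)) = delta_mx j i.
Proof. by apply/matrixP => a b; rewrite !mxE conjC_nat andbC. Qed.

Lemma adjmxM m n p (A : 'M[C]_(m, n)) (B : 'M[C]_(n, p)) :
  adjmx (A *m B) = adjmx B *m adjmx A.
Proof. by rewrite /adjmx map_mxM trmx_mul. Qed.

Lemma adjmxK m n (A : 'M[C]_(m, n)) : adjmx (adjmx A) = A.
Proof. by apply/matrixP => i j; rewrite !mxE conjCK. Qed.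

Lemma proj_delta n (x : bits n) : proj R x = delta_mx (bidx x) (bidx x).
Proof.
rewrite /proj.
have -> : ket R x = delta_mx (bidx x) 0.
  by apply/matrixP => a b; rewrite !mxE ord1 eqxx andbT.
by rewrite adjmx_delta mul_delta_mx.
Qed.

Lemma mxtrace_mul_delta d (A : 'M[C]_d) c : \tr (A *m delta_mx c c) = A c c.
Proof.
rewrite -(mul_delta_mx (0 : 'I_1)) mulmxA mxtrace_mulC mulmxA -rowE -colE.
by rewrite /mxtrace big_ord1 !mxE.
Qed.

Lemma psd_diag d (M : 'M[C]_d) p : psd M -> 0 <= M p p.
Proof. by move=> /(_ (delta_mx p 0)); rewrite adjmx_delta -rowE -colE !mxE. Qed.

Lemma psd_rank1 d (u : 'cV[C]_d) : psd (u *m adjmx u).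
Proof.
move=> v; rewrite !mulmxA -mulmxA -{2}(adjmxK v) -adjmxM.
by rewrite mxE big_ord1 {2}/adjmx !mxE mul_conjC_ge0.
Qed.

(* A completely positive map (already its 1-extension) sends the rank-one
   projector u u^* to a matrix with nonnegative diagonal. *)
Lemma cp_rank1_diag n (Phi : qmap R n) (u : 'cV[C]_(2 ^ n)) c :
  completely_positive Phi -> 0 <= Phi (u *m adjmx u) c c.
Proof.
move=> CP; pose u1 : 'cV[C]_(2 ^ n * 1) := \col_p u (mxtens_unindex p).1 0.
have := psd_diag (mxtens_index (c, ord0)) (CP 1%N _ (psd_rank1 u1)).
rewrite /ext_id !big_ord1 tensmxE [delta_mx _ _ _ _]mxE !eqxx mulr1.
suff -> : \matrix_(i, j) (u1 *m adjmx u1) (mxtens_index (i, ord0))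
                                          (mxtens_index (j, ord0)) = u *m adjmx u by [].
by apply/matrixP => i j; rewrite !mxE !big_ord1 !mxE !mxtens_indexK /= !ord1.
Qed.

Lemma Re_ge0 (x : C) : 0 <= x -> 0 <= complex.Re x.
Proof. by rewrite lecE => /andP[]. Qed.

Lemma ReD (x y : C) : complex.Re (x + y) = complex.Re x + complex.Re y.
Proof. exact: (raddfD (@complex.Re R : Rcomplex R -> R)). Qed.

Lemma Re_sum I (r : seq I) (F : I -> C) :
  complex.Re (\sum_(i <- r) F i) = \sum_(i <- r) complex.Re (F i).
Proof. exact: (raddf_sum (@complex.Re R : Rcomplex R -> R)). Qed.

Lemma Re_toCM (a : R) (x : C) : complex.Re (toC a * x) = a * complex.Re x.
Proof. by case: x => c d; rewrite /toC /= mul0r subr0. Qed.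

(* f_Phi(x, y) is the y-th diagonal entry of Phi(|x><x|), a probability. *)
Lemma fPhi_bound n (Phi : qmap R n) z : is_channel Phi -> 0 <= fPhi Phi z <= 1.
Proof.
case=> _ [CP TP]; rewrite /fPhi (proj_delta z.2) mxtrace_mul_delta.
have diag_ge0 k : 0 <= complex.Re (Phi (proj R z.1) k k).
  by apply: Re_ge0; rewrite /proj; apply: cp_rank1_diag.
have tr1 : complex.Re (\tr (Phi (proj R z.1))) = 1.
  by rewrite TP proj_delta -[delta_mx _ _]mul1mx mxtrace_mul_delta mxE eqxx.
rewrite diag_ge0 /=; move: tr1; rewrite /mxtrace Re_sum (bigD1 (bidx z.2)) //= => <-.
by rewrite lerDl sumr_ge0.
Qed.

(* The trace is homogeneous; stated here because the scaling in [conv_hull]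
   is elaborated through the semimodule structure of matrices. *)
Lemma mxtrace_scale d (a : C) (A : 'M[C]_d) : \tr (a *: A) = a * \tr A.
Proof. by rewrite /mxtrace mulr_sumr; apply: eq_bigr => j _; rewrite mxE. Qed.

Lemma mxtrace_sum d I (r : seq I) (F : I -> 'M[C]_d) :
  \tr (\sum_(i <- r) F i) = \sum_(i <- r) \tr (F i).
Proof. exact: (big_morph _ (@mxtraceD _ _) (mxtrace0 _ _)). Qed.

Lemma fPhi_lincomb n (Phi : qmap R n) k (w : 'I_k -> R) (Phis : 'I_k -> qmap R n) z :
  (forall X, Phi X = \sum_(i < k) toC (w i) *: Phis i X) ->
  fPhi Phi z = \sum_(i < k) w i * fPhi (Phis i) z.
Proof.
move=> PhiE; rewrite /fPhi PhiE mulmx_suml mxtrace_sum Re_sum.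
by apply: eq_bigr => i _; rewrite -(scalemxAl (toC (w i))) mxtrace_scale Re_toCM.
Qed.

Lemma fPhi_mix n (Phi Phi' Psi : qmap R n) a l z :
  (forall X, Phi' X = toC a *: (Psi X + toC l *: Phi X)) ->
  fPhi Phi' z = a * (fPhi Psi z + l * fPhi Phi z).
Proof.
move=> Phi'E; rewrite /fPhi Phi'E -scalemxAl mxtrace_scale Re_toCM mulmxDl mxtraceD.
by rewrite ReD -scalemxAl mxtrace_scale Re_toCM.
Qed.

End ChannelFunctions.

Lemma max_pair_bound (R : realDomainType) (A B x l : R) : 0 <= l -> 0 <= A + B ->
  x <= (1 + l) * A + l * B -> - x <= (1 + l) * B + l * A ->
  Num.max A x + Num.max B (- x) <= (1 + l) * (A + B).
Proof.
move=> l0 AB0 xub xlb; have lAB : 0 <= l * (A + B) by apply: mulr_ge0.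
by case: (lerP A x) => _; case: (lerP B (- x)) => _; nra.
Qed.

Lemma le_mul_inf (R : realType) (L : set R) (a b : R) : L !=set0 -> 0 <= a ->
  (forall l, L l -> b <= (1 + l) * a) -> b <= (1 + inf L) * a.
Proof.
move=> [l0 Ll0] a0 Lb; have [a_eq0 | a_neq0] := eqVneq a 0.
  by have := Lb l0 Ll0; rewrite a_eq0 !mulr0.
have a_gt0 : 0 < a by rewrite lt_neqAle eq_sym a_neq0.
have : b / a - 1 <= inf L.
  apply: lb_le_inf; first by exists l0.
  by move=> l Ll; rewrite lerBlDl ler_pdivrMr //; apply: Lb.
by rewrite lerBlDl ler_pdivrMr // mulrC.
Qed.

(** * Correlations of a function class with a sign vector *)

Section Correlation.
Variables (R : realType) (Z : Type) (m : nat) (S : 'I_m -> Z).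

Local Notation signs := {ffun 'I_m -> bool}.

Definition corr (e : signs) (g : Z -> R) : R :=
  m%:R^-1 * \sum_(i < m) ((-1) ^+ e i) * g (S i).

Definition corrs (G : set (Z -> R)) (e : signs) : set R := [set corr e g | g in G].

Lemma emp_rademacherE (G : set (Z -> R)) :
  emp_rademacher G S = (2 ^ m)%N%:R^-1 * \sum_e sup (corrs G e).
Proof. by []. Qed.

Definition flip (e : signs) : signs := [ffun i => ~~ e i].

Lemma flipK : involutive flip.
Proof. by move=> e; apply/ffunP => i; rewrite !ffunE negbK. Qed.

Lemma sum_flip (F : signs -> R) : \sum_e F (flip e) = \sum_e F e.
Proof. by rewrite [RHS](reindex_inj (can_inj flipK)). Qed.

Lemma corr_flip e g : corr (flip e) g = - corr e g.
Proof.
rewrite /corr -mulrN -sumrN; congr (_ * _); apply: eq_bigr => i _.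
by rewrite ffunE; case: (e i); rewrite /= ?expr0 ?expr1 ?mulNr ?mul1r ?opprK.
Qed.

Lemma corr_lin e f g a b :
  corr e (fun z => a * f z + b * g z) = a * corr e f + b * corr e g.
Proof.
rewrite /corr (mulrCA a) (mulrCA b) -mulrDr; congr (_ * _).
by rewrite !mulr_sumr -big_split; apply: eq_bigr => i _ /=; ring.
Qed.

Lemma corr_lincomb e k (w : 'I_k -> R) (gs : 'I_k -> Z -> R) :
  corr e (fun z => \sum_(j < k) w j * gs j z) = \sum_(j < k) w j * corr e (gs j).
Proof.
rewrite /corr.
transitivity (\sum_(j < k) \sum_(i < m) m%:R^-1 * ((-1) ^+ e i * (w j * gs j (S i)))).
  rewrite [RHS]exchange_big mulr_sumr; apply: eq_bigr => i _ /=.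
  by rewrite !mulr_sumr.
by apply: eq_bigr => j _; rewrite !mulr_sumr; apply: eq_bigr => i _; ring.
Qed.

Definition unit_valued (G : set (Z -> R)) : Prop :=
  forall g, G g -> forall z, 0 <= g z <= 1.

Lemma corrs_ubound G e : unit_valued G -> has_ubound (corrs G e).
Proof.
move=> G01; exists (m%:R^-1 * m%:R) => _ [g Gg <-].
rewrite ler_wpM2l ?invr_ge0 ?ler0n // -[m in m%:R]card_ord -sumr_const.
apply: ler_sum => i _; have /andP[g0 g1] := G01 g Gg (S i).
by case: (e i); rewrite /= ?expr0 ?expr1 ?mulN1r ?mul1r //; lra.
Qed.

Lemma corr_le_sup G e g : unit_valued G -> G g -> corr e g <= sup (corrs G e).
Proof. by move=> G01 Gg; apply: (ub_le_sup (corrs_ubound e G01)); exists g. Qed.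

Definition fconv (G : set (Z -> R)) : set (Z -> R) :=
  fun g => exists (k : nat) (w : 'I_k -> R) (gs : 'I_k -> Z -> R),
    [/\ forall i, 0 <= w i, \sum_(i < k) w i = 1, forall i, G (gs i) &
        g = fun z => \sum_(i < k) w i * gs i z].

(* Correlation is linear, so it cannot exceed its supremum on the hull. *)
Lemma corr_fconv_le G e g : unit_valued G -> fconv G g -> corr e g <= sup (corrs G e).
Proof.
move=> G01 [k [w [gs [w0 w1 Ggs ->]]]]; rewrite corr_lincomb.
apply: le_trans (_ : \sum_(i < k) w i * sup (corrs G e) <= _).
  by apply: ler_sum => i _; rewrite ler_wpM2l ?corr_le_sup.
by rewrite -mulr_suml w1 mul1r.
Qed.

Section NonemptyClass.
Variable G : set (Z -> R).
Hypothesis G0 : G !=set0.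
Hypothesis G01 : unit_valued G.

Local Notation sG e := (sup (corrs G e)).

Lemma corrs_nonempty e : corrs G e !=set0.
Proof. by case: G0 => g Gg; exists (corr e g), g. Qed.

(* s_G(e) + s_G(-e) >= corr_e(g) - corr_e(g) = 0 for any g in G. *)
Lemma sup_corrs_width e : 0 <= sG e + sG (flip e).
Proof.
case: G0 => g Gg; have := corr_le_sup e G01 Gg.
have := corr_le_sup (flip e) G01 Gg; rewrite corr_flip; lra.
Qed.

Lemma sum_sup_corrs_ge0 : 0 <= \sum_e sG e.
Proof.
have : 0 <= \sum_e (sG e + sG (flip e)) by apply: sumr_ge0 => e _; apply: sup_corrs_width.
by rewrite big_split /= (sum_flip (fun e => sG e)); lra.
Qed.

Variable h : Z -> R.
Hypothesis h01 : forall z, 0 <= h z <= 1.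

Local Notation sGh e := (sup (corrs (G `|` [set h]) e)).

Lemma sup_corrs_mono e : sG e <= sGh e.
Proof.
have Gh01 : unit_valued (G `|` [set h]) by move=> g [/G01 | ->].
apply: ge_sup; first exact: corrs_nonempty.
by move=> _ [g Gg <-]; apply: corr_le_sup; first exact: Gh01; left.
Qed.

Lemma sup_corrs_add e : sGh e <= Num.max (sG e) (corr e h).
Proof.
apply: ge_sup; first by case: G0 => g Gg; exists (corr e g), g => //; left.
move=> _ [g [Gg | ->] <-]; rewrite le_max ?lexx ?orbT //.
by rewrite corr_le_sup.
Qed.

Lemma sup_corrs_pair_bound l g g' e : 0 <= l -> fconv G g -> fconv G g' ->
  h = (fun z => (1 + l) * g' z + (- l) * g z) ->
  sGh e + sGh (flip e) <= (1 + l) * (sG e + sG (flip e)).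
Proof.
move=> l0 Gg Gg' hE.
have corr_h f : corr f h = (1 + l) * corr f g' - l * corr f g.
  by rewrite hE corr_lin mulNr.
have bound f : corr f h <= (1 + l) * sG f + l * sG (flip f).
  by rewrite corr_h -mulrN -corr_flip lerD ?ler_wpM2l ?addr_ge0 ?corr_fconv_le.
apply: le_trans (lerD (sup_corrs_add e) (sup_corrs_add (flip e))) _.
rewrite corr_flip; apply: (max_pair_bound l0 (sup_corrs_width e) (bound e)).
by rewrite -corr_flip -[in X in _ <= _ + _ * X](flipK e); apply: bound.
Qed.

Lemma sum_sup_corrs_bound l g g' : 0 <= l -> fconv G g -> fconv G g' ->
  h = (fun z => (1 + l) * g' z + (- l) * g z) ->
  \sum_e sGh e <= (1 + l) * \sum_e sG e.
Proof.
move=> l0 Gg Gg' hE.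
have : \sum_e (sGh e + sGh (flip e)) <= \sum_e (1 + l) * (sG e + sG (flip e)).
  by apply: ler_sum => e _; apply: sup_corrs_pair_bound Gg Gg' hE.
rewrite -mulr_sumr !big_split /= (sum_flip (fun e => sGh e)) (sum_flip (fun e => sG e)).
lra.
Qed.

Lemma emp_rademacher_add_bounds (L : set R) : L !=set0 ->
  (forall l, L l -> 0 <= l /\ exists g g', [/\ fconv G g, fconv G g' &
                 h = (fun z => (1 + l) * g' z + (- l) * g z)]) ->
  emp_rademacher G S <= emp_rademacher (G `|` [set h]) S
    <= (1 + inf L) * emp_rademacher G S.
Proof.
move=> L0 Ldec; rewrite !emp_rademacherE.
have c0 : 0 <= (2 ^ m)%N%:R^-1 :> R by rewrite invr_ge0 ler0n.
apply/andP; split.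
  by rewrite ler_wpM2l //; apply: ler_sum => e _; apply: sup_corrs_mono.
rewrite mulrCA ler_wpM2l //.
apply: le_mul_inf L0 sum_sup_corrs_ge0 _ => l /Ldec[l0 [g [g' [Gg Gg' hE]]]].
exact: sum_sup_corrs_bound Gg Gg' hE.
Qed.

End NonemptyClass.
End Correlation.

Lemma weighted_sum_bounds (R : realDomainType) (T : finType) (p f g : T -> R) (c : R) :
  (forall t, 0 <= p t) -> (forall t, f t <= g t <= c * f t) ->
  \sum_t p t * f t <= \sum_t p t * g t <= c * \sum_t p t * f t.
Proof.
move=> p0 fg; rewrite mulr_sumr; apply/andP; split; apply: ler_sum => t _.
  by rewrite ler_wpM2l //; case/andP: (fg t).
by rewrite mulrCA ler_wpM2l //; case/andP: (fg t).
Qed.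

(** * From channels to function classes *)

Section ChannelClasses.
Variables (R : realType) (n : nat) (O : set (qmap R n)).
Hypothesis O_channels : forall Phi, O Phi -> is_channel Phi.

Lemma Fcl_unit_valued : unit_valued (Fcl O).
Proof. by move=> _ [Phi OPhi <-] z; apply/fPhi_bound/O_channels. Qed.

Lemma fPhi_conv_hull Phi : conv_hull O Phi -> fconv (Fcl O) (fPhi Phi).
Proof.
case=> k [w [Phis [w0 w1 OPhis PhiE]]]; exists k, w, (fun i => fPhi (Phis i)).
split=> // [i | ]; first by exists (Phis i).
by apply: funext => z; apply: fPhi_lincomb.
Qed.

(* A robustness witness l writes f_Psi = (1 + l) f_Phi' - l f_Phi with
   Phi, Phi' free, where Phi' = (Psi + l Phi) / (1 + l). *)
Lemma robustness_decomposition Psi l : robustness_set O Psi l ->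
  0 <= l /\ exists g g', [/\ fconv (Fcl O) g, fconv (Fcl O) g' &
                 fPhi Psi = (fun z => (1 + l) * g' z + (- l) * g z)].
Proof.
case=> l0 [Phi [hullPhi hullPhi']]; split=> //.
exists (fPhi Phi), (fPhi (fun X => toC (1 + l)^-1 *: (Psi X + toC l *: Phi X))).
split; [exact: fPhi_conv_hull | exact: fPhi_conv_hull |].
apply: funext => z; rewrite (fPhi_mix z (fun X => erefl)) mulrA mulfV ?mul1r.
  by ring.
by rewrite gt_eqF // ltr_pwDl.
Qed.

Lemma Fcl_add Psi : Fcl (O `|` [set Psi]) = Fcl O `|` [set fPhi Psi].
Proof. by rewrite /Fcl image_setU image_set1. Qed.

End ChannelClasses.

Theorem theorem1 (R : realType) (n : nat) (O : set (qmap R n)) (Psi : qmap R n) :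
  O !=set0 ->
  (forall Phi, O Phi -> is_channel Phi) ->
  is_channel Psi ->
  robustness_finite O Psi ->
  (forall (m : nat) (S : 'I_m -> bits n * bits n), (0 < m)%N ->
     emp_rademacher (Fcl O) S <= emp_rademacher (Fcl (O `|` [set Psi])) S
     <= (1 + robustness O Psi) * emp_rademacher (Fcl O) S) /\
  (forall (m : nat) (D : {ffun bits n * bits n -> R}), is_distribution D -> (0 < m)%N ->
     rademacher D (Fcl O) m <= rademacher D (Fcl (O `|` [set Psi])) m
     <= (1 + robustness O Psi) * rademacher D (Fcl O) m).
Proof.
move=> [Phi0 OPhi0] O_channels Psi_channel gamma_finite.
have empirical m (S : 'I_m -> bits n * bits n) :
    emp_rademacher (Fcl O) S <= emp_rademacher (Fcl (O `|` [set Psi])) S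
    <= (1 + robustness O Psi) * emp_rademacher (Fcl O) S.
  rewrite Fcl_add; apply: emp_rademacher_add_bounds gamma_finite _.
  - by exists (fPhi Phi0), Phi0.
  - exact: Fcl_unit_valued.
  - by move=> z; apply: fPhi_bound.
  - by move=> l; apply: robustness_decomposition.
split=> [m S _ | m D [D0 _] _]; first exact: empirical.
apply: weighted_sum_bounds => [S | S]; last exact: empirical.
by apply: prodr_ge0 => i _; apply: D0.
Qed.
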